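(* Let $n\geq 5$ be an integer. There is a set $X$ of partitions of $n$ with the following properties: (1) there is no integer $1\le i\le n/2$ which is a partial sum of $x$ for every $x\in X$; (2) for every $x\in X$ there exists an integer $1\le i\le n/2$ which is a partial sum of $y$ for every $y\in X\setminus\{x\}$; (3) $|X|>\frac n2-\log n$.
   Context: Logarithms are in base $2$. A partition of $n$ is a finite multiset $(a_1,\dots,a_t)$ of positive integers with sum $n$. An integer $m$ is a partial sum of $(a_1,\dots,a_t)$ if $m=a_{j_1}+\cdots+a_{j_\ell}$ for some $\ell\ge 1$ and $1\le j_1<\dots<j_\ell\le t$. *)

From mathcomp Require Import all_boot.
From Stdlib Require Import Reals.

(* A partition of n, represented canonically as the nonincreasing list of its
   parts (so a finite multiset of positive integers corresponds to exactly one list). *)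
Definition is_partition (n : nat) (s : seq nat) : bool :=
  [&& sorted geq s, all (fun a => 0 < a) s & sumn s == n].

Definition is_partial_sum (m : nat) (s : seq nat) : Prop :=
  exists t : seq nat, [&& subseq t s, t != [::] & sumn t == m].

Definition log2 (x : R) : R := (ln x / ln 2)%R.

(* The family is indexed by p in [1, h], h = n/2, minus a set of at most
   log2 n - 1/2 "exceptional" values; the partition x_p misses the partial
   sum p but has every other non-exceptional value of [1, h], and every
   exceptional value is missed by some x_p.  Then (1) and (2) hold with
   i = p, and (3) is the count. *)

From mathcomp Require Import all_boot zify.
From Stdlib Require Import Reals Lra.

(* For v >= 1 this is [is_partial_sum] ([partial_sumP]); all the
   reasoning below is done with this boolean recursion. *)
Fixpoint subsum (l : seq nat) (v : nat) : bool :=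
  if l is a :: l' then subsum l' v || (a <= v) && subsum l' (v - a) else v == 0.

Lemma subsum0 l : subsum l 0.
Proof. by elim: l => //= a l ->. Qed.

Lemma subsum_le {l v} : subsum l v -> v <= sumn l.
Proof.
elim: l v => [|a l IH] v /=; first by move/eqP->.
by case/orP=> [/IH|/andP[av /IH]]; lia.
Qed.

Lemma subsum_consL a l v : subsum l v -> subsum (a :: l) v.
Proof. by move=> /= ->. Qed.

Lemma subsum_consR a l v : subsum l v -> subsum (a :: l) (a + v).
Proof. by move=> H /=; rewrite leq_addr addKn H orbT. Qed.

Lemma subsum_cat l1 l2 u w : subsum l1 u -> subsum l2 w -> subsum (l1 ++ l2) (u + w).
Proof.
elim: l1 u => [|a l1 IH] u /=; first by move/eqP-> => ->.
case/orP=> [/IH H /H -> //|/andP[au /IH H] /H H2].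
by rewrite (leq_trans au (leq_addr _ _)) -addnBAC // H2 orbT.
Qed.

Lemma subsum_ones k v : subsum (nseq k 1) v = (v <= k).
Proof.
elim: k v => [|k IH] [|v] //=; rewrite !IH ?subSS ?subn0 /=; lia.
Qed.

Lemma subsum_compl l v : subsum l v -> subsum l (sumn l - v).
Proof.
elim: l v => [|a l IH] v /=; first by move/eqP->.
case/orP=> [H|/andP[av H]]; have vl := subsum_le H.
  by have := subsum_consR a _ _ (IH _ H); rewrite addnBA.
by rewrite (_ : a + sumn l - v = sumn l - (v - a)) ?subsum_consL ?IH //; lia.
Qed.

Lemma subsumP l v : reflect (exists2 t, subseq t l & sumn t = v) (subsum l v).
Proof.
apply: (iffP idP).
  elim: l v => [|a l IH] v /=; first by move/eqP->; exists [::].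
  case/orP=> [/IH [t tl <-]|/andP[av /IH [t tl tv]]].
    by exists t => //; apply: subseq_trans tl (subseq_cons l a).
  by exists (a :: t); rewrite /= ?eqxx ?tv ?subnKC.
case=> t /subseqP[m _ ->] <-.
elim: l m => [|a l IH] [|[] m] //=; first by rewrite subsum0.
- by rewrite leq_addr addKn IH orbT.
- by rewrite IH.
Qed.

Lemma subsum_perm l1 l2 : perm_eq l1 l2 -> subsum l1 =1 subsum l2.
Proof.
suff imp k1 k2 : perm_eq k1 k2 -> forall v, subsum k1 v -> subsum k2 v.
  by move=> pe v; apply/idP/idP; apply: imp; rewrite // perm_sym.
move=> pe v /subsumP[t tk <-].
have [|s sk ts] := (count_subseqP t k2).1.
  by move=> x; rewrite -(permP pe); apply: leq_count_subseq.
by apply/subsumP; exists s; rewrite // (perm_sumn ts).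
Qed.

Lemma partial_sumP l v : 1 <= v -> is_partial_sum v l <-> subsum l v.
Proof.
move=> v1; split => [[t /and3P[tl _ /eqP tv]]|/subsumP[t tl tv]].
  by apply/subsumP; exists t.
exists t; rewrite tl tv eqxx andbT; apply: contraTneq v1 => t0.
by rewrite -tv t0.
Qed.

Lemma subsum_gap big k c v : all (leq c) big -> k < v -> v < c ->
  ~~ subsum (big ++ nseq k 1) v.
Proof.
move=> + kv vc; elim: big => [|a big IH] /=; first by rewrite subsum_ones -ltnNge.
by case/andP=> ca /IH /negbTE ->; rewrite leqNgt (leq_trans vc ca).
Qed.

Lemma subsum_cons_large a l v : v < a -> subsum (a :: l) v = subsum l v.
Proof. by move=> va /=; rewrite leqNgt va orbF. Qed.

Lemma subsum_ones_above big k u t : subsum big u -> t <= k -> subsum (big ++ nseq k 1) (u + t).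
Proof. by move=> H tk; apply: subsum_cat; rewrite ?subsum_ones. Qed.

Definition covers (l : seq nat) (j B : nat) : Prop :=
  forall v, v <= B -> v != j -> subsum l v.

(* The invariant of the greedy construction below: l covers everything up to
   sumn l - (j + 1) except j.  Together with complementation this means that
   the subset sums of l are all of [0, sumn l] except j and sumn l - j. *)
Definition gap_cover (l : seq nat) (j : nat) : Prop := covers l j (sumn l - j.+1).

Lemma sumn_nseq k a : sumn (nseq k a) = k * a.
Proof. by elim: k => //= k ->; rewrite mulSn. Qed.

Lemma covers_cons l j B c : covers l j B -> j + c <= B -> covers (c :: l) j (B + c).
Proof.
move=> C jc v vB vj; case: (leqP v B) => vb; first by apply/subsum_consL/C.
rewrite (_ : v = c + (v - c)); last by lia.
by apply/subsum_consR/C; lia.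
Qed.

Lemma gap_cover_cons l j c : gap_cover l j -> j.*2 + c < sumn l -> gap_cover (c :: l) j.
Proof.
move=> C jc; rewrite /gap_cover /= (_ : c + sumn l - j.+1 = sumn l - j.+1 + c); last by lia.
by apply: covers_cons C _; lia.
Qed.

Lemma gap_cover_nseq l j K : gap_cover l j -> (3 * j).+1 < sumn l ->
  gap_cover (nseq K j.+1 ++ l) j.
Proof.
move=> C jl; elim: K => [|K IH] //=; apply: gap_cover_cons IH _.
by rewrite sumn_cat sumn_nseq; lia.
Qed.

(* The seed of the construction: parts j + 1 + d and j + 1 together with
   j - 1 ones; its subset sums are [0, j - 1], [j + 1, 2j] and beyond. *)
Definition seed (j d : nat) : seq nat := [:: j.+1 + d; j.+1].

Lemma seed_cover j d : 1 <= j -> d <= j -> gap_cover (seed j d ++ nseq j.-1 1) j.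
Proof.
move=> j1 dj; have sum_seed : sumn (seed j d ++ nseq j.-1 1) = (3 * j).+1 + d.
  by rewrite sumn_cat sumn_nseq /=; lia.
move=> v; rewrite sum_seed => vB vj; rewrite /seed !cat_cons.
case: (ltnP v j) => vlt; first by apply/subsum_consL/subsum_consL; rewrite subsum_ones; lia.
case: (leqP v j.*2) => v2.
  rewrite (_ : v = j.+1 + (v - j.+1)); last by move: vj; lia.
  by apply/subsum_consL/subsum_consR; rewrite subsum_ones; move: vj; lia.
rewrite (_ : v = j.+1 + d + (v - (j.+1 + d))); last by lia.
by apply/subsum_consR/subsum_consL; rewrite subsum_ones; lia.
Qed.

(* The parts larger than j of a partition of m >= 3j + 1 whose only missing
   subset sums in [0, m] are j and m - j: the surplus E = m - (3j + 1) over
   the seed is split into a seed offset d <= j and parts j + 1, using one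
   part j + 2 when E - 1 = j mod (j + 1). *)
Definition large_parts (j m : nat) : seq nat :=
  let E := m - (3 * j).+1 in
  let q := E.-1 %/ j.+1 in
  let r := E.-1 %% j.+1 in
  if E <= j then seed j E
  else if r < j then nseq q j.+1 ++ seed j r.+1
  else if 2 <= q then nseq (q - 2) j.+1 ++ j.+2 :: j.+1 :: seed j j
  else j.+2 :: seed j j.

Definition gap_partition (j m : nat) : seq nat := large_parts j m ++ nseq j.-1 1.

(* The two excluded values
   of m are genuine obstructions: no partition of 4j + 2 (nor of 8 when
   j = 1) has exactly the gaps j and m - j. *)
Lemma gap_partition_spec j m : 1 <= j -> (3 * j).+1 <= m -> m != 4 * j + 2 ->
  (1 < j) || (m != 5 * j + 3) ->
  [/\ sumn (gap_partition j m) = m, gap_cover (gap_partition j m) j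
    & all (leq j.+1) (large_parts j m)].
Proof.
move=> j1 m1 m2 m3; rewrite /gap_partition /large_parts.
have e1 := divn_eq (m - (3 * j).+1).-1 j.+1.
have e2 : (m - (3 * j).+1).-1 %% j.+1 < j.+1 by rewrite ltn_mod.
set E := m - (3 * j).+1 in e1 e2 *.
set q := E.-1 %/ j.+1 in e1 *; set r := E.-1 %% j.+1 in e1 e2 *.
have eE : E = m - (3 * j).+1 by [].
have seed_sum d : sumn (seed j d ++ nseq j.-1 1) = (3 * j).+1 + d.
  by rewrite sumn_cat /= sumn_nseq; lia.
have seed_large d : all (leq j.+1) (seed j d) by rewrite /= leq_addr leqnn.
clearbody E q r.
case: (leqP E j) => Ej.
  by split; [rewrite seed_sum; lia | apply: seed_cover; lia |].
case: (ltnP r j) => rj.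
  rewrite -catA; split.
  - by rewrite sumn_cat sumn_nseq seed_sum; lia.
  - by apply: gap_cover_nseq; [apply: seed_cover | rewrite seed_sum]; lia.
  - by rewrite all_cat all_nseq leqnn orbT seed_large.
have sj := seed_cover _ _ j1 (leqnn j); have ss := seed_sum j.
case: (leqP 2 q) => q2.
  have qj : 2 * j.+1 <= q * j.+1 by rewrite leq_mul2r q2 orbT.
  rewrite -catA; split.
  - by rewrite sumn_cat sumn_nseq /= sumn_nseq mulnBl; lia.
  - have c1 : gap_cover (j.+1 :: seed j j ++ nseq j.-1 1) j.
      by apply: gap_cover_cons => //; rewrite ss; lia.
    have c2 : gap_cover (j.+2 :: j.+1 :: seed j j ++ nseq j.-1 1) j.
      by apply: gap_cover_cons => //; rewrite /= sumn_nseq; lia.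
    by apply: gap_cover_nseq => //; rewrite /= sumn_nseq; lia.
  - by rewrite all_cat all_nseq leqnn orbT /= leq_addr !ltnS leqnSn leqnn.
have {}e1 : E = 2 * j + 2.
  by move: q2 e1; case: q => [|[|q]] //= _; lia.
split.
- by rewrite /= sumn_nseq; lia.
- by apply: gap_cover_cons => //; rewrite ss; lia.
- by rewrite /= leq_addr !ltnS leqnSn leqnn.
Qed.

Lemma gap_partition_subsumE j m v : 1 <= j -> (3 * j).+1 <= m -> m != 4 * j + 2 ->
  (1 < j) || (m != 5 * j + 3) ->
  subsum (gap_partition j m) v = [&& v <= m, v != j & v != m - j].
Proof.
move=> j1 m1 m2 m3; have [sumE cov large] := gap_partition_spec _ _ j1 m1 m2 m3.
have lack_j : ~~ subsum (gap_partition j m) j.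
  by rewrite /gap_partition; apply: (subsum_gap _ _ j.+1) => //; lia.
apply/idP/idP => [Hv|/and3P[vm vj vmj]].
  have vm := subsum_le Hv; rewrite sumE in vm.
  rewrite vm /=; apply/andP; split; apply: contraNneq lack_j => ev; first by rewrite ev in Hv.
  by have := subsum_compl _ _ Hv; rewrite sumE ev (_ : m - (m - j) = j) //; lia.
move: cov; rewrite /gap_cover sumE => cov.
case: (leqP v (m - j.+1)) => vle; first exact: cov.
have := subsum_compl _ _ (cov (m - v) _ _); rewrite sumE (_ : m - (m - v) = v) //; lia.
Qed.

Lemma gap_partition_pos j m : all (leq j.+1) (large_parts j m) ->
  all (fun a => 0 < a) (gap_partition j m).
Proof.
move=> large; rewrite all_cat all_nseq orbT andbT.
by apply: sub_all large => a; apply: leq_trans.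
Qed.

Lemma log2_gt (n k : nat) : expn 2 (2 * k).+1 < expn n 2 -> (INR k + / 2 < log2 (INR n))%R.
Proof.
move=> H; have n0 : (0 < INR n)%R by apply: lt_0_INR; case: n H => [|n] //= _; lia.
have natpow a b : expn a b = Nat.pow a b by elim: b => // b IH; rewrite expnS IH.
move: H; rewrite !natpow => /ltP /lt_INR; rewrite !pow_INR => H.
have ln2 := ln_lt_2.
have two : (0 < INR 2)%R by simpl; lra.
have := ln_increasing _ _ (pow_lt _ _ two) H.
rewrite !ln_pow // S_INR -multE mult_INR (_ : INR 2 = 2%R) => [Hln|]; last by simpl; lra.
rewrite /log2; apply: (Rmult_lt_reg_r (ln 2)); first lra.
rewrite /Rdiv Rmult_assoc Rinv_l; lra.
Qed.

Lemma size_bound (n s k : nat) : expn 2 (2 * k).+1 < expn n 2 -> n <= 2 * (s + k) + 1 ->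
  (INR s > INR n / 2 - log2 (INR n))%R.
Proof.
move=> /log2_gt Hk /leP /le_INR; rewrite plus_INR mult_INR plus_INR /= => Hn; lra.
Qed.

(* Write h = n/2 (rounded down) and
   J = (h - 1)/3.  The indices p in [1, h] split into
   - p = h - 1, served by [top_part];
   - the range h - J <= p <= h - 2, served by a gap partition whose
     missing value [partner n p] is of the form J / 2^i;
   - in the special case n = 6J + 6, the index p = h - J - 2;
   - the middle range (h - 1)/2 <= p < h - J;
   - the small indices p < (h - 1)/2, served by [gap_partition p n].
   The values h, the partners and, in the special case, h - J - 1 are the
   exceptional values: they are not used as indices. *)
Definition halfn (n : nat) : nat := n./2.
Definition jmax (n : nat) : nat := (halfn n).-1 %/ 3.

Definition dyadic_partner (J g : nat) : nat := J %/ expn 2 (trunc_log 2 (J %/ g)).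

Lemma dyadic_partner_spec J g : 2 <= g -> g <= J ->
  let j := dyadic_partner J g in
  [/\ g <= j, j < 2 * g, j <= J, (j == J) || (2 * j <= J) &
      exists2 i, i < trunc_log 2 J & j = J %/ expn 2 i].
Proof.
move=> g2 gJ j; rewrite /j /dyadic_partner.
set t := J %/ g; have t1 : 0 < t by rewrite divn_gt0 //; lia.
have [bt tb] := andP (trunc_log_bounds (isT : 1 < 2) t1).
set i := trunc_log 2 t in bt tb *; set b := expn 2 i in bt tb *.
have b0 : 0 < b by rewrite expn_gt0.
have gt : g * t <= J by rewrite mulnC leq_divM.
have c1 : g <= J %/ b.
  by rewrite leq_divRL //; apply: leq_trans gt; rewrite leq_mul2l bt orbT.
have c2 : J %/ b < 2 * g.
  rewrite ltn_divLR //; apply: (leq_trans (ltn_ceil J (ltnW g2))).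
  rewrite expnS in tb; apply: (@leq_trans ((2 * b) * g)); last by rewrite mulnAC.
  by rewrite leq_mul2r tb orbT.
have bJ : 2 * b <= J.
  apply: leq_trans (leq_divM J b); apply: (@leq_trans (g * b)); first by rewrite leq_mul2r g2 orbT.
  by rewrite leq_mul2r c1 orbT.
split => //; first exact: leq_div.
- case: (posnP i) => [i0|ipos]; first by rewrite /b i0 expn0 divn1 eqxx.
  have b2 : 2 <= b by rewrite -(expn1 2) leq_pexp2l.
  by apply/orP; right; apply: leq_trans (leq_divM J b); rewrite mulnC leq_mul2l b2 orbT.
- by exists i => //; apply: trunc_log_max => //; rewrite expnS.
Qed.

Definition partner (n p : nat) : nat := dyadic_partner (jmax n) (halfn n - p).

Definition special (n : nat) : bool := [&& ~~ odd n, 3 %| halfn n & 0 < jmax n].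

Definition upper_range (n : nat) : seq nat := iota (halfn n - jmax n) (jmax n).-1.

Definition exceptional (n v : nat) : bool :=
  [|| v == halfn n, special n && (v == halfn n - jmax n - 1)
    | has (fun p => partner n p == v) (upper_range n)].

Definition top_part (n : nat) : seq nat := (n - halfn n + 2) :: nseq (halfn n - 2) 1.

Definition pair_part (a b p : nat) : seq nat := [:: a; b] ++ nseq p.-1 1.

(* For p in the upper range: a gap partition of p + j missing j and p,
   completed by one large part; j = [partner n p] is exceptional. *)
Definition upper_part (n p : nat) : seq nat :=
  (n - (p + partner n p)) :: gap_partition (partner n p) (p + partner n p).

(* The partition of n assigned to index p: it is meant to miss p and no
   other non-exceptional value of [1, h]. *)
Definition part_for (n p : nat) : seq nat :=
  if p == (halfn n).-1 then top_part n
  else if halfn n - jmax n <= p then upper_part n p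
  else if special n && (p == halfn n - jmax n - 2) then pair_part p.+2 p.+2 p
  else if (halfn n).-1 <= p.*2 then pair_part (n - p.*2) p.+1 p
  else gap_partition p n.

Definition indices (n : nat) : seq nat := [seq p <- iota 1 (halfn n) | ~~ exceptional n p].

Definition family (n : nat) : seq (seq nat) := [seq sort geq (part_for n p) | p <- indices n].

Definition good (n : nat) : Prop :=
  [/\ forall p, p \in indices n ->
        [/\ sumn (part_for n p) = n, all (fun a => 0 < a) (part_for n p),
            ~~ subsum (part_for n p) p &
            forall q, q \in indices n -> q != p -> subsum (part_for n p) q],
      forall v, v \in iota 1 (halfn n) -> exceptional n v ->
        exists2 p, p \in indices n & ~~ subsum (part_for n p) v
    & expn 2 (2 * count (exceptional n) (iota 1 (halfn n))).+1 < expn n 2].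

Lemma mem_indices n p : (p \in indices n) = [&& 1 <= p, p <= halfn n & ~~ exceptional n p].
Proof.
rewrite mem_filter mem_iota add1n ltnS.
by case: (exceptional n p); case: (1 <= p); case: (p <= halfn n).
Qed.

Lemma subsum_sort l : subsum (sort geq l) =1 subsum l.
Proof. by apply: subsum_perm; rewrite perm_sort. Qed.

(* The theorem for n follows from [good n]: X is the family, (1) holds since
   each i is either an index (missed by its own partition) or exceptional,
   (2) holds with i = p for the member x_p, and the members are distinct
   because x_p misses p while x_q does not. *)
Lemma family_of_good n : good n ->
  exists X : seq (seq nat),
    [/\ uniq X, all (is_partition n) X,
        ~ (exists i : nat, [/\ 1 <= i, i.*2 <= n & forall x, x \in X -> is_partial_sum i x]),
        (forall x, x \in X ->
           exists i : nat, [/\ 1 <= i, i.*2 <= n &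
             forall y, y \in X -> y != x -> is_partial_sum i y])
      & (INR (size X) > INR n / 2 - log2 (INR n))%R].
Proof.
case=> sep exc count_exc; exists (family n).
have mem_family p : p \in indices n -> sort geq (part_for n p) \in family n.
  exact: map_f.
have half_le i : (i <= halfn n) = (i.*2 <= n) by rewrite /halfn -geq_half_double.
split.
- rewrite map_inj_in_uniq ?filter_uniq ?iota_uniq // => p q pP qP E.
  apply/eqP; apply: contraT => pq; have [_ _ lack _] := sep _ pP.
  by have [_ _ _ /(_ _ pP pq)] := sep _ qP; rewrite -subsum_sort -E subsum_sort (negbTE lack).
- apply/allP=> _ /mapP[p /sep[sumE pos _ _] ->].
  have pe := permEl (perm_sort geq (part_for n p)).
  rewrite /is_partition (sort_sorted (fun x y => leq_total y x)) (perm_all _ pe).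
  by rewrite (perm_sumn pe) sumE pos eqxx.
- case=> i [i1]; rewrite -half_le => ih Hi.
  case Ei: (exceptional n i).
    have [p pP lack] := exc i (ltac:(by rewrite mem_iota i1 add1n ltnS)) Ei.
    by move: (Hi _ (mem_family p pP)); rewrite partial_sumP // subsum_sort (negbTE lack).
  have iP : i \in indices n by rewrite mem_indices i1 ih Ei.
  have [_ _ lack _] := sep _ iP.
  by move: (Hi _ (mem_family i iP)); rewrite partial_sumP // subsum_sort (negbTE lack).
- move=> _ /mapP[p pP ->]; exists p; move: (pP); rewrite mem_indices => /and3P[p1 ph _].
  split; rewrite -?half_le // => _ /mapP[q qP ->] ne.
  have pq : p != q by apply: contraNneq ne => ->.
  by have [_ _ _ /(_ _ pP pq)] := sep _ qP; rewrite partial_sumP // subsum_sort.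
- rewrite /family size_map size_filter; apply: (size_bound _ _ _ count_exc).
  have := count_predC (exceptional n) (iota 1 (halfn n)).
  rewrite size_iota addnC /halfn => ->.
  by have := odd_double_half n; case: (odd n) => /= ?; lia.
Qed.

(* [sums l] lists the subset sums of l without repetition; unlike [subsum]
   it shares work between the values, which makes the checks for small n
   feasible by evaluation. *)
Definition sums (l : seq nat) : seq nat :=
  foldr (fun a S => undup (S ++ map (addn a) S)) [:: 0] l.

Lemma mem_sums l v : (v \in sums l) = subsum l v.
Proof.
elim: l v => [|a l IH] v /=; first by rewrite inE.
rewrite mem_undup mem_cat IH; congr orb.
apply/mapP/andP => [[w wl ->]|[av pl]]; first by rewrite leq_addr addKn -IH.
by exists (v - a); rewrite ?IH ?subnKC.
Qed.

Definition good_check (n : nat) : bool :=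
  [&& all (fun p => let x := part_for n p in let S := sums x in
         [&& sumn x == n, all (fun a => 0 < a) x, p \notin S &
             all (fun q => (q == p) || (q \in S)) (indices n)]) (indices n),
      all (fun v => exceptional n v ==> has (fun p => v \notin sums (part_for n p)) (indices n))
        (iota 1 (halfn n))
    & expn 2 (2 * count (exceptional n) (iota 1 (halfn n))).+1 < expn n 2].

Lemma good_checkP n : good_check n -> good n.
Proof.
case/and3P=> /allP sep /allP exc bound; split => //.
- move=> p /sep /and4P[/eqP sumE pos lack others]; rewrite mem_sums in lack.
  split => // q qP qp; move/allP: others => /(_ _ qP).
  by rewrite (negbTE qp) mem_sums.
- move=> v vI Ev; move: (exc v vI); rewrite Ev => /hasP[p pP lack].
  by exists p; rewrite -?mem_sums.
Qed.

Lemma small_good : all good_check (iota 5 36).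
Proof. by vm_compute. Qed.

Lemma count_le_size (T : eqType) (a : pred T) (s t : seq T) :
  uniq s -> (forall x, x \in s -> a x -> x \in t) -> count a s <= size t.
Proof.
move=> us sT; rewrite -size_filter; apply: uniq_leq_size; first by rewrite filter_uniq.
by move=> x; rewrite mem_filter => /andP[ax xs]; apply: sT.
Qed.

Section LargeN.

Variable n : nat.
Hypothesis n41 : 41 <= n.

Local Notation h := (halfn n).
Local Notation J := (jmax n).

Lemma half_facts : [/\ 2 * h <= n, n <= 2 * h + 1, 3 * J <= h.-1, h.-1 <= 3 * J + 2 & 6 <= J].
Proof.
have := odd_double_half n; rewrite /jmax /halfn.
have := leq_divM (n./2).-1 3; have := ltn_ceil (n./2).-1 (isT : 0 < 3).
by case: (odd n) => /= a b c; rewrite -muln2 in c; split; lia.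
Qed.

Lemma special_iff : special n = (n == 2 * h) && (h == 3 * J + 3).
Proof.
have [b1 b2 b3 b4 b5] := half_facts.
rewrite /special; have := odd_double_half n.
have := divn_eq h 3; have := ltn_mod h 3.
rewrite /jmax; have := divn_eq h.-1 3; have := ltn_mod h.-1 3.
rewrite /dvdn; case: (odd n) => /= c d e f g; rewrite -muln2 in g.
  by apply/esym/negbTE; lia.
rewrite (_ : 0 < h.-1 %/ 3) ?andbT; last by lia.
by apply/eqP/andP => [m0|[/eqP x /eqP y]]; [split; apply/eqP|]; lia.
Qed.

Lemma partner_spec p : h - J <= p -> p <= h - 2 ->
  [/\ h - p <= partner n p, partner n p < 2 * (h - p), partner n p <= J,
      (partner n p == J) || (2 * partner n p <= J) &
      exists2 i, i < trunc_log 2 J & partner n p = J %/ expn 2 i].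
Proof.
have [b1 b2 b3 b4 b5] := half_facts.
by move=> p1 p2; apply: dyadic_partner_spec; lia.
Qed.

Definition separates (x : seq nat) (p : nat) : Prop :=
  [/\ sumn x = n, all (fun a => 0 < a) x, ~~ subsum x p &
      forall q, 1 <= q -> q <= h -> q != p -> ~~ exceptional n q -> subsum x q].

Lemma exceptional_half : exceptional n h.
Proof. by rewrite /exceptional eqxx. Qed.

Lemma exceptional_special : special n -> exceptional n (h - J - 1).
Proof. by move=> sp; rewrite /exceptional sp eqxx orbT. Qed.

Lemma exceptional_partner p : h - J <= p -> p <= h - 2 -> exceptional n (partner n p).
Proof.
have [b1 b2 b3 b4 b5] := half_facts.
move=> p1 p2; rewrite /exceptional; apply/orP; right; apply/orP; right.
by apply/hasP; exists p => //; rewrite mem_iota p1 /=; lia.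
Qed.

Lemma top_part_lacks v : h.-1 <= v <= h -> ~~ subsum (top_part n) v.
Proof.
have [b1 b2 b3 b4 b5] := half_facts.
by move=> /andP[v1 v2]; apply: (subsum_gap [:: n - h + 2] _ (n - h + 2)) => /=; rewrite ?leqnn //; lia.
Qed.

Lemma top_separates : separates (top_part n) h.-1.
Proof.
have [b1 b2 b3 b4 b5] := half_facts.
split.
- by rewrite /= sumn_nseq; lia.
- by rewrite /= all_nseq orbT andbT; lia.
- by apply: top_part_lacks; lia.
- move=> q q1 qh qp qJ; have qh' : q != h by apply: contraNneq qJ => ->; apply: exceptional_half.
  by have := subsum_ones_above [:: n - h + 2] (h - 2) 0 q (subsum0 _); rewrite add0n; apply; lia.
Qed.

Lemma upper_part_subsumE p v : h - J <= p -> p <= h - 2 -> v <= h ->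
  subsum (upper_part n p) v = (v != partner n p) && (v != p).
Proof.
have [b1 b2 b3 b4 b5] := half_facts.
move=> p1 p2 vh; have [g1 g2 g3 g4 _] := partner_spec _ p1 p2.
set j := partner n p in g1 g2 g3 g4 *.
have gapE : subsum (gap_partition j (p + j)) v = (v != j) && (v != p).
  by rewrite gap_partition_subsumE ?addnK; lia.
case: (ltnP v (n - (p + j))) => v_big; first by rewrite /upper_part subsum_cons_large.
rewrite /upper_part /= gapE.
have -> : (v != j) && (v != p) = true by apply/andP; split; apply/eqP; lia.
by rewrite orTb.
Qed.

Lemma upper_separates p : h - J <= p -> p <= h - 2 -> separates (upper_part n p) p.
Proof.
have [b1 b2 b3 b4 b5] := half_facts.
move=> p1 p2; have [g1 g2 g3 g4 _] := partner_spec _ p1 p2.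
have := @gap_partition_spec (partner n p) (p + partner n p).
case=> [||||sumE _ large]; try lia.
split.
- by rewrite /= sumE; lia.
- by rewrite /= gap_partition_pos // andbT; lia.
- by rewrite upper_part_subsumE ?eqxx ?andbF //; lia.
- move=> q q1 qh qp qJ; rewrite upper_part_subsumE // qp andbT.
  by apply: contraNneq qJ => ->; apply: exceptional_partner.
Qed.

Lemma pair_part_subsum a b p q : q < p \/ b <= q < b + p -> subsum (pair_part a b p) q.
Proof.
rewrite /pair_part; case=> [qp|/andP[bq qb]].
  by have := subsum_ones_above [:: a; b] p.-1 0 q (subsum0 _); rewrite add0n; apply; lia.
have sb : subsum [:: a; b] b by rewrite /= leqnn subnn !orbT.
by have := subsum_ones_above _ p.-1 _ (q - b) sb; rewrite subnKC //; apply; lia.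
Qed.

(* In the special case n = 6J + 6, the index p = h - J - 2 = 2J + 1 is served by
   (p + 2, p + 2, 1^(p-1)), which misses p and the exceptional value p + 1. *)
Lemma special_part_lacks v : special n -> h - J - 2 <= v <= h - J - 1 ->
  ~~ subsum (pair_part (h - J - 2).+2 (h - J - 2).+2 (h - J - 2)) v.
Proof.
have [b1 b2 b3 b4 b5] := half_facts.
by move=> _ /andP[v1 v2]; rewrite /pair_part; apply: (subsum_gap _ _ (h - J - 2).+2) => /=; rewrite ?leqnn //; lia.
Qed.

Lemma special_separates : special n ->
  separates (pair_part (h - J - 2).+2 (h - J - 2).+2 (h - J - 2)) (h - J - 2).
Proof.
have [b1 b2 b3 b4 b5] := half_facts.
move=> sp; move: (sp); rewrite special_iff => /andP[/eqP e1 /eqP e2].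
split; rewrite ?/pair_part.
- by rewrite /= sumn_nseq; lia.
- by rewrite /= all_nseq orbT.
- by apply: special_part_lacks => //; lia.
- move=> q q1 qh qp qJ; apply: pair_part_subsum.
  have: q != h by apply: contraNneq qJ => ->; apply: exceptional_half.
  have: q != h - J - 1 by apply: contraNneq qJ => ->; apply: exceptional_special.
  by lia.
Qed.

(* The middle range: (n - 2p, p + 1, 1^(p-1)) misses p and reaches all of
   [1, 2p] otherwise. *)
Lemma middle_separates p : 1 <= p -> h.-1 <= p.*2 -> (3 * p).+1 <= n ->
  separates (pair_part (n - p.*2) p.+1 p) p.
Proof.
move=> p1 ph pn; rewrite /pair_part; split.
- by rewrite /= sumn_nseq; lia.
- by rewrite /= all_nseq orbT andbT; lia.
- by apply: (subsum_gap _ _ p.+1) => /=; rewrite ?leqnn ?andbT //; lia.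
- move=> q q1 qh qp qJ; apply: pair_part_subsum.
  have: q != h by apply: contraNneq qJ => ->; apply: exceptional_half.
  by lia.
Qed.

(* The small indices p < (h - 1)/2 are served by [gap_partition p n], whose
   subset sums miss only p and n - p > h. *)
Lemma lower_separates p : 1 <= p -> p.*2 < h.-1 -> separates (gap_partition p n) p.
Proof.
have [b1 b2 b3 b4 b5] := half_facts.
move=> p1 ph; have [||||sumE _ large] := @gap_partition_spec p n; try lia.
split => //; first exact: gap_partition_pos.
- by rewrite gap_partition_subsumE ?eqxx ?andbF //; lia.
- by move=> q q1 qh qp _; rewrite gap_partition_subsumE //; lia.
Qed.

Lemma part_for_separates p : p \in indices n -> separates (part_for n p) p.
Proof.
have [b1 b2 b3 b4 b5] := half_facts.
rewrite mem_indices => /and3P[p1 ph pJ].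
have ph' : p != h by apply: contraNneq pJ => ->; apply: exceptional_half.
rewrite /part_for; case: eqP => [->|ptop]; first exact: top_separates.
case: leqP => [p_upper|p_below]; first by apply: upper_separates; lia.
case: ifP => [/andP[sp /eqP ->]|nsp]; first exact: special_separates.
case: leqP => [p_middle|p_lower]; last by apply: lower_separates; lia.
apply: middle_separates => //.
case sp: (special n); move: (sp); rewrite special_iff.
  case/andP=> /eqP e1 /eqP e2; move: nsp; rewrite sp /= => /negbT.
  have : p != h - J - 1 by apply: contraNneq pJ => ->; apply: exceptional_special.
  by lia.
by move/negbT; rewrite negb_and => /orP[] /eqP; lia.
Qed.

Lemma large_index w : J < w -> w < h -> (special n -> w != h - J - 1) -> w \in indices n.
Proof.
have [b1 b2 b3 b4 b5] := half_facts.
move=> Jw wh ws; rewrite mem_indices /exceptional !negb_or; apply/and3P; split; try lia.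
apply/and3P; split; [lia | by case: (special n) ws => //= -> |].
apply/hasP => [[p pB /eqP e]]; move: pB; rewrite mem_iota => /andP[pl pu].
by have [_ _ g3 _ _] := partner_spec p pl (ltac:(lia)); lia.
Qed.

Lemma part_for_upper p : h - J <= p -> p <= h - 2 -> part_for n p = upper_part n p.
Proof.
have [b1 b2 b3 b4 b5] := half_facts.
by move=> p1 p2; rewrite /part_for ifN ?p1 //; apply/eqP; lia.
Qed.

Lemma exceptional_missed v : v \in iota 1 h -> exceptional n v ->
  exists2 p, p \in indices n & ~~ subsum (part_for n p) v.
Proof.
have [b1 b2 b3 b4 b5] := half_facts.
rewrite mem_iota => /andP[v1 vh].
rewrite /exceptional => /or3P[/eqP->|/andP[sp /eqP->]|/hasP[p pB /eqP<-]].
- exists h.-1; first by apply: large_index => //; lia.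
  by rewrite /part_for eqxx; apply: top_part_lacks; lia.
- move: (sp); rewrite special_iff => /andP[/eqP e1 /eqP e2].
  exists (h - J - 2); first by apply: large_index => //; lia.
  rewrite /part_for ifN; last by apply/eqP; lia.
  rewrite ifN; last by rewrite -ltnNge; lia.
  by rewrite sp eqxx /=; apply: special_part_lacks => //; lia.
- move: pB; rewrite mem_iota => /andP[pl pu].
  exists p; first by apply: large_index => //; lia.
  have [_ _ g3 _ _] := partner_spec p pl (ltac:(lia)).
  by rewrite part_for_upper ?upper_part_subsumE ?eqxx //; lia.
Qed.

(* There are at most log2 J + 2 exceptional values: h, the special value and
   the numbers J / 2^i with 2^(i+1) <= J. *)
Lemma count_exceptional : count (exceptional n) (iota 1 h) <= trunc_log 2 J + 2.
Proof.
have [b1 b2 b3 b4 b5] := half_facts.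
set L := trunc_log 2 J.
have := @count_le_size _ (exceptional n) (iota 1 h)
  (h :: h - J - 1 :: map (fun i => J %/ expn 2 i) (iota 0 L)) (iota_uniq _ _).
rewrite /= size_map size_iota addn2; apply=> x _.
rewrite /exceptional => /or3P[/eqP ->|/andP[_ /eqP ->]|/hasP[p pB /eqP <-]];
  rewrite ?inE ?eqxx ?orbT //.
move: pB; rewrite mem_iota => /andP[pl pu].
have [_ _ _ _ [i iL ->]] := partner_spec p pl (ltac:(lia)).
by rewrite (map_f (fun i => J %/ expn 2 i)) ?orbT // mem_iota.
Qed.

Lemma exceptional_bound : expn 2 (2 * count (exceptional n) (iota 1 h)).+1 < expn n 2.
Proof.
have [b1 b2 b3 b4 b5] := half_facts.
have kL := count_exceptional; set k := count _ _ in kL *; set L := trunc_log 2 J in kL.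
have LJ : expn 2 L <= J by apply: trunc_logP; lia.
have k5 : expn 2 (2 * k).+1 <= 32 * (expn 2 L * expn 2 L).
  by rewrite -expnD (_ : 32 = expn 2 5) // -expnD; apply: leq_pexp2l => //; lia.
have LL : expn 2 L * expn 2 L <= J * J by apply: leq_mul.
have Jn : 36 * (J * J) <= n * n by nia.
have J0 : 0 < J * J by rewrite muln_gt0; lia.
rewrite (_ : expn n 2 = n * n); last by rewrite expnS expn1.
lia.
Qed.

Lemma good_large : good n.
Proof.
split; [|exact: exceptional_missed|exact: exceptional_bound].
move=> p pP; have [sumE pos lack covers] := part_for_separates p pP.
split=> // q; rewrite mem_indices => /and3P[q1 qh qJ] qp.
exact: covers.
Qed.

End LargeN.

Theorem proposition1p4 (n : nat) (hn : 5 <= n) :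
  exists X : seq (seq nat),
    [/\ uniq X, all (is_partition n) X,
        (* (1) *)
        ~ (exists i : nat, [/\ 1 <= i, i.*2 <= n & forall x, x \in X -> is_partial_sum i x]),
        (* (2) *)
        (forall x, x \in X ->
           exists i : nat, [/\ 1 <= i, i.*2 <= n &
             forall y, y \in X -> y != x -> is_partial_sum i y])
      & (* (3) *)
        (INR (size X) > INR n / 2 - log2 (INR n))%R].
Proof.
apply: family_of_good.
have [n_large|n_small] := leqP 41 n; first exact: good_large.
by apply: good_checkP; move/allP: small_good; apply; rewrite mem_iota hn.
Qed.
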